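(* Let $k$ be a field and $Q$ the cyclic quiver $\widetilde{\mathbb A}_{\,l}$ (vertices $0,\dots,l$ modulo $l+1$, arrows $i\to i+1$). Let $M,N$ be finite-dimensional nilpotent representations and $X$ an extension of $M$ by $N$, i.e. there is a short exact sequence $0\to N\to X\to M\to 0$. Then $\mu(X)\le\mu(M)\cup\mu(N)$, with equality if and only if $X\cong M\oplus N$.
   Context: For a nilpotent representation $M$, $\mu(M)$ is the partition formed by the Loewy lengths of the indecomposable direct summands of $M$. For partitions $\lambda,\mu$, $\lambda\cup\mu$ is the partition formed by all parts of $\lambda$ and $\mu$ arranged in decreasing order. For partitions $\lambda\ne\mu$ of the same integer, $\lambda<\mu$ means that at the first index $i$ with $\lambda_i\neq\mu_i$ one has $\lambda_i>\mu_i$. *)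

From HB Require Import structures.
From mathcomp Require Import all_boot all_order all_algebra.
From Stdlib Require List.
Set Implicit Arguments. Unset Strict Implicit. Unset Printing Implicit Defensive.
Import GRing.Theory.
Local Open Scope ring_scope.

(* A finite-dimensional representation of the cyclic quiver with vertices
   'I_(l.+1) (= 0..l modulo l+1) and arrows i -> i+1, given in a basis of
   homogeneous vectors: rdim = total dimension, rgr b = vertex of basis
   vector b, ract = matrix of the sum of all arrow maps, acting on row
   vectors (v |-> v *m ract). *)
Record rep (k : fieldType) (l : nat) := Rep {
  rdim : nat;
  rgr : 'I_rdim -> 'I_l.+1;
  ract : 'M[k]_rdim }.
Arguments rdim {k l}.
Arguments rgr {k l}.
Arguments ract {k l}.

Section Reps.
Variables (k : fieldType) (l : nat).
Implicit Types R S : rep k l.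

Definition is_rep R : Prop :=
  forall i j, ract R i j != 0 -> rgr R j = ordS (rgr R i).

Definition nilpotent_rep R : Prop := exists m : nat, ract R ^+ m = 0.

Definition rhom R S (f : 'M[k]_(rdim R, rdim S)) : Prop :=
  (forall i j, f i j != 0 -> rgr S j = rgr R i) /\ ract R *m f = f *m ract S.

Definition riso R S : Prop :=
  exists (f : 'M[k]_(rdim R, rdim S)) (g : 'M[k]_(rdim S, rdim R)),
    [/\ rhom f, rhom g, f *m g = 1%:M & g *m f = 1%:M].

Definition zero_rep : rep k l := @Rep k l 0 (fun i => ord0) 0.

Definition dsum R S : rep k l :=
  @Rep k l (rdim R + rdim S)
    (fun i => match split i with inl a => rgr R a | inr b => rgr S b end)
    (block_mx (ract R) 0 0 (ract S)).

Definition bigdsum (rs : seq (rep k l)) : rep k l := foldr dsum zero_rep rs.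

Definition indecomposable R : Prop :=
  is_rep R /\ (0 < rdim R)%N /\
  forall A B, is_rep A -> is_rep B -> riso R (dsum A B) ->
    rdim A = 0 \/ rdim B = 0.

(* Loewy length of a nilpotent representation: the radical is the image of
   the arrows, so rad^m R = 0 iff ract R ^+ m = 0; the Loewy length is the
   least such m (which is <= rdim R). *)
Definition loewy R : nat :=
  find (fun m => ract R ^+ m == 0) (iota 0 (rdim R).+1).

(* mu_of R p : p is the partition formed by the Loewy lengths of the
   indecomposable summands in some decomposition of R into indecomposables
   (well defined by Krull-Schmidt). *)
Definition mu_of R (p : seq nat) : Prop :=
  exists rs : seq (rep k l),
    [/\ forall r, List.In r rs -> indecomposable r,
        riso R (bigdsum rs) &
        p = sort geq (map loewy rs)].

Definition ses N X M : Prop :=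
  exists (i : 'M[k]_(rdim N, rdim X)) (p : 'M[k]_(rdim X, rdim M)),
    [/\ rhom i, rhom p, row_free i, row_full p & (i == kermx p)%MS].

End Reps.

Arguments zero_rep {k l}.

(* partitions as weakly decreasing lists of positive integers *)
Definition part_union (p q : seq nat) : seq nat := sort geq (p ++ q).

Definition part_lt (p q : seq nat) : Prop :=
  p <> q /\ exists i : nat,
    (forall j, (j < i)%N -> nth 0%N p j = nth 0%N q j) /\ (nth 0%N q i < nth 0%N p i)%N.

Definition part_le (p q : seq nat) : Prop := p = q \/ part_lt p q.

From mathcomp Require Import all_boot all_order all_algebra zify.
Set Implicit Arguments. Unset Strict Implicit. Unset Printing Implicit Defensive.
Import GRing.Theory.

(* Over the cyclic quiver every indecomposable nilpotent representation is a
   string.  If L is its Loewy length and (A^(L-1))_bc <> 0, the vectors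
   e_b A^j (j < L) span a copy of the string of length L starting at the
   vertex of b, and the vectors A^(L-1-j) e_c give a retraction onto it, so
   this string splits off.  A representation is thus a multiset of strings
   (vertex, length); the ranks r_v(m) of A^m restricted to the vertex v
   determine that multiset, and the total ranks r(m) = sum_i (mu_i - m)_+
   determine the partition mu.
   For 0 -> N -> X -> M -> 0 one has r^X(m) >= r^M(m) + r^N(m), vertex by
   vertex.  Summed over all vertices these are inequalities between partial
   sums of conjugate partitions, which give mu(X) <= mu(M) u mu(N); when
   equality holds they are equalities, hence equalities at every vertex, so X
   and M (+) N consist of the same strings. *)

Local Open Scope ring_scope.

Section Homogeneous.
Variables (k : fieldType) (l : nat).
Local Notation V := 'I_l.+1.

Definition homog m n (g : 'I_m -> V) (h : 'I_n -> V) (sh : V -> V)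
    (Y : 'M[k]_(m, n)) :=
  forall i j, Y i j != 0 -> h j = sh (g i).

Definition gproj n (P : pred V) (g : 'I_n -> V) : 'M[k]_n :=
  diag_mx (\row_i (P (g i))%:R).

Lemma mulmx_neq0_entry m n p (Y : 'M[k]_(m, n)) (Z : 'M[k]_(n, p)) i j :
  (Y *m Z) i j != 0 -> exists t, Y i t != 0 /\ Z t j != 0.
Proof.
move=> nz; have: [exists t, (Y i t != 0) && (Z t j != 0)].
  apply: contraNT nz => /existsPn Yt0; rewrite mxE big1 // => t _.
  by have /nandP[/negbNE/eqP->|/negbNE/eqP->] := Yt0 t; rewrite ?mul0r ?mulr0.
by case/existsP => t /andP[]; exists t.
Qed.

Section HomogAlgebra.
Variables (m n p : nat) (g : 'I_m -> V) (h : 'I_n -> V) (e : 'I_p -> V).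

Lemma homogM s1 s2 (Y : 'M[k]_(m, n)) (Z : 'M[k]_(n, p)) :
  homog g h s1 Y -> homog h e s2 Z -> homog g e (s2 \o s1) (Y *m Z).
Proof. by move=> hY hZ i j /mulmx_neq0_entry [t [/hY ht /hZ ->]]; rewrite ht. Qed.

Lemma eq_homog s1 s2 (Y : 'M[k]_(m, n)) :
  s1 =1 s2 -> homog g h s1 Y -> homog g h s2 Y.
Proof. by move=> e12 hY i j /hY ->. Qed.

Lemma homogD s (Y Z : 'M[k]_(m, n)) :
  homog g h s Y -> homog g h s Z -> homog g h s (Y + Z).
Proof.
move=> hY hZ i j; rewrite mxE; have [->|/hY//] := eqVneq (Y i j) 0.
by rewrite add0r => /hZ.
Qed.

Lemma homogN s (Y : 'M[k]_(m, n)) : homog g h s Y -> homog g h s (- Y).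
Proof. by move=> hY i j; rewrite mxE oppr_eq0 => /hY. Qed.

Lemma homog1 : homog g g id (1%:M : 'M[k]_m).
Proof. by move=> i j; rewrite mxE; have [->|] := eqVneq i j; rewrite ?eqxx. Qed.

Lemma gproj_mull P (Y : 'M[k]_(m, n)) i j :
  (gproj P g *m Y) i j = (P (g i))%:R * Y i j.
Proof. by rewrite mul_diag_mx !mxE. Qed.

Lemma gproj_mulr P (Y : 'M[k]_(m, n)) i j :
  (Y *m gproj P h) i j = Y i j * (P (h j))%:R.
Proof. by rewrite mul_mx_diag !mxE. Qed.

Lemma homog_gproj sh (Y : 'M[k]_(m, n)) (P Q : pred V) :
  homog g h sh Y -> (forall d, P d = Q (sh d)) ->
  gproj P g *m Y = Y *m gproj Q h.
Proof.
move=> hY PQ; apply/matrixP => i j; rewrite gproj_mull gproj_mulr.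
have [->|/hY ->] := eqVneq (Y i j) 0; first by rewrite mulr0 mul0r.
by rewrite -PQ mulrC.
Qed.

Lemma gproj_homog sh (Y : 'M[k]_(m, n)) :
  (forall d, gproj (pred1 d) g *m Y = Y *m gproj (pred1 (sh d)) h) ->
  homog g h sh Y.
Proof.
move=> Ysh i j nz; have := congr1 (fun M : 'M[k]_(m, n) => M i j) (Ysh (g i)).
rewrite gproj_mull gproj_mulr /= eqxx mul1r.
by case: eqP => // _; rewrite mulr0 => Y0; rewrite Y0 eqxx in nz.
Qed.

End HomogAlgebra.

Lemma homog_inv m n (g : 'I_m -> V) (h : 'I_n -> V)
    (Y : 'M[k]_(m, n)) (Z : 'M[k]_(n, m)) :
  homog g h id Y -> Y *m Z = 1%:M -> Z *m Y = 1%:M -> homog h g id Z.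
Proof.
move=> hY YZ ZY; apply: gproj_homog => d.
have Yd := homog_gproj (P := pred1 d) (Q := pred1 d) hY (fun _ => erefl).
rewrite -[gproj _ h *m Z]mul1mx -ZY -!mulmxA (mulmxA Y) -Yd.
by rewrite -!mulmxA YZ mulmx1.
Qed.

Lemma homog_pinv m n p (g : 'I_m -> V) (h : 'I_n -> V) (e : 'I_p -> V) sh
    (B : 'M[k]_(p, n)) (Y : 'M[k]_(m, n)) :
  injective sh -> row_free B -> homog e h id B -> homog g h sh Y ->
  (Y <= B)%MS -> homog g e sh (Y *m pinvmx B).
Proof.
move=> sh_inj freeB hB hY YB; apply: gproj_homog => d.
have := mulmxKpV YB; move: (pinvmx B) => C YCB.
apply: (row_free_inj freeB); rewrite -[RHS]mulmxA.
rewrite (homog_gproj (P := pred1 (sh d)) (Q := pred1 (sh d)) hB) //.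
rewrite [RHS]mulmxA YCB -[LHS]mulmxA YCB.
by apply: homog_gproj hY _ => c /=; rewrite (inj_eq sh_inj).
Qed.

Lemma gproj_mul n P Q (g : 'I_n -> V) :
  gproj P g *m gproj Q g = gproj (predI P Q) g :> 'M[k]_n.
Proof.
apply/matrixP => i j; rewrite mul_diag_mx !mxE /=.
by case: (P (g i)); rewrite ?mul1r ?mul0r ?mul0rn.
Qed.

Lemma gprojT n (g : 'I_n -> V) : gproj predT g = 1%:M :> 'M[k]_n.
Proof. by apply/matrixP => i j; rewrite !mxE. Qed.

Lemma gprojC n P (g : 'I_n -> V) :
  1%:M - gproj P g = gproj (predC P) g :> 'M[k]_n.
Proof.
apply/matrixP => i j; rewrite !mxE /=.
by case: (P (g i)); case: (i == j); rewrite ?subrr ?subr0.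
Qed.

End Homogeneous.
Arguments gproj {k l n}.

Lemma intertwineX (R : pzRingType) m n (A : 'M[R]_m) (B : 'M[R]_n)
    (f : 'M[R]_(m, n)) e :
  A *m f = f *m B -> A ^+ e *m f = f *m B ^+ e.
Proof.
move=> Af; elim: e => [|e IHe]; first by rewrite !expr0 mul1mx mulmx1.
by rewrite !exprS -!mulmxE -mulmxA IHe !mulmxA Af.
Qed.

Lemma iter_inj (T : Type) (f : T -> T) n : injective f -> injective (iter n f).
Proof. by move=> f_inj; elim: n => [//|n IHn] x y /= /f_inj/IHn. Qed.

Section Morphisms.
Variables (k : fieldType) (l : nat).
Implicit Types R S T : rep k l.

Lemma rep_exp_homog R m : is_rep R ->
  homog (rgr R) (rgr R) (iter m (@ordS l.+1)) (ract R ^+ m).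
Proof.
move=> repR; elim: m => [|m IHm]; first by rewrite expr0; apply: homog1.
rewrite exprS -mulmxE; apply: eq_homog (homogM repR IHm) => v /=.
by rewrite -iterSr iterS.
Qed.

Lemma rhom1 R : rhom (1%:M : 'M[k]_(rdim R)).
Proof. by split; [apply: homog1 | rewrite mulmx1 mul1mx]. Qed.

Lemma rhomM R S T (f : 'M[k]_(rdim R, rdim S)) (g : 'M[k]_(rdim S, rdim T)) :
  rhom f -> rhom g -> rhom (f *m g).
Proof.
move=> [hf Af] [hg Ag]; split; first exact: (homogM hf hg : homog _ _ id _).
by rewrite mulmxA Af -mulmxA Ag mulmxA.
Qed.

Lemma rhom_inv R S (f : 'M[k]_(rdim R, rdim S)) (g : 'M[k]_(rdim S, rdim R)) :
  rhom f -> f *m g = 1%:M -> g *m f = 1%:M -> rhom g.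
Proof.
move=> [hf Af] fg gf; split; first exact: homog_inv hf fg gf.
rewrite -[ract S *m g]mul1mx -gf -!mulmxA (mulmxA f) -Af.
by rewrite -!mulmxA fg mulmx1.
Qed.

Lemma riso_refl R : riso R R.
Proof. by exists 1%:M, 1%:M; split; rewrite ?mulmx1 //; apply: rhom1. Qed.

Lemma riso_sym R S : riso R S -> riso S R.
Proof. by case=> f [g [hf hg fg gf]]; exists g, f. Qed.

Lemma riso_trans R S T : riso R S -> riso S T -> riso R T.
Proof.
case=> f [g [hf hg fg gf]] [f' [g' [hf' hg' fg' gf']]].
exists (f *m f'), (g' *m g); split; try exact: rhomM.
  by rewrite -mulmxA (mulmxA f') fg' mul1mx fg.
by rewrite -mulmxA (mulmxA g) gf mul1mx gf'.
Qed.

Lemma rhom_gproj R S (f : 'M[k]_(rdim R, rdim S)) P :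
  rhom f -> gproj P (rgr R) *m f = f *m gproj P (rgr S).
Proof. by case=> hf _; apply: homog_gproj hf _. Qed.

Definition grank R (P : pred 'I_l.+1) m := \rank (gproj P (rgr R) *m ract R ^+ m).

Lemma grank_riso R S P m : riso R S -> grank R P m = grank S P m.
Proof.
suff grank_le R' S' : riso R' S' -> (grank R' P m <= grank S' P m)%N.
  by move=> isoRS; apply/eqP; rewrite eqn_leq !grank_le //; apply: riso_sym.
case=> f [g [hf hg fg gf]]; rewrite /grank.
have -> : gproj P (rgr R') *m ract R' ^+ m =
          f *m (gproj P (rgr S') *m ract S' ^+ m) *m g.
  rewrite -[LHS]mulmx1 -fg !mulmxA -(mulmxA _ _ f) (intertwineX _ hf.2).
  by rewrite mulmxA (rhom_gproj P hf) -!mulmxA.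
by rewrite (leq_trans (mxrankM_maxl _ _)) // mxrankM_maxr.
Qed.

End Morphisms.

Section DirectSums.
Variables (k : fieldType) (l : nat).
Local Notation V := 'I_l.+1.
Implicit Types R S T : rep k l.

Definition gr_sum m n (g : 'I_m -> V) (h : 'I_n -> V) (i : 'I_(m + n)) : V :=
  match split i with inl a => g a | inr b => h b end.

Lemma split_lshift m n (a : 'I_m) : split (lshift n a) = inl a.
Proof. exact: (unsplitK (inl a)). Qed.

Lemma split_rshift m n (b : 'I_n) : split (rshift m b) = inr b.
Proof. exact: (unsplitK (inr b)). Qed.

Ltac block_simpl := rewrite /= ?(split_lshift, split_rshift, block_mxEul,
  block_mxEur, block_mxEdl, block_mxEdr, row_mxEl, row_mxEr, col_mxEu,
  col_mxEd, mxE).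

Lemma homog_block m1 m2 n1 n2 g1 g2 h1 h2 s
    (Y1 : 'M[k]_(m1, n1)) (Y2 : 'M[k]_(m2, n2)) :
  homog g1 h1 s Y1 -> homog g2 h2 s Y2 ->
  homog (gr_sum g1 g2) (gr_sum h1 h2) s (block_mx Y1 0 0 Y2).
Proof.
rewrite /gr_sum => hY1 hY2 i j.
case: (split_ordP i) => a ->; case: (split_ordP j) => b ->; block_simpl;
  by [apply: hY1 | apply: hY2 | rewrite eqxx].
Qed.

Lemma homog_row m n1 n2 (g : 'I_m -> V) h1 h2 s
    (Y1 : 'M[k]_(m, n1)) (Y2 : 'M[k]_(m, n2)) :
  homog g h1 s Y1 -> homog g h2 s Y2 -> homog g (gr_sum h1 h2) s (row_mx Y1 Y2).
Proof.
rewrite /gr_sum => hY1 hY2 i j.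
by case: (split_ordP j) => b ->; block_simpl; [apply: hY1 | apply: hY2].
Qed.

Lemma homog_col m1 m2 n g1 g2 (h : 'I_n -> V) s
    (Y1 : 'M[k]_(m1, n)) (Y2 : 'M[k]_(m2, n)) :
  homog g1 h s Y1 -> homog g2 h s Y2 -> homog (gr_sum g1 g2) h s (col_mx Y1 Y2).
Proof.
rewrite /gr_sum => hY1 hY2 i j.
by case: (split_ordP i) => a ->; block_simpl; [apply: hY1 | apply: hY2].
Qed.

Lemma gproj_sum m n P (g : 'I_m -> V) (h : 'I_n -> V) :
  gproj P (gr_sum g h) = block_mx (gproj P g) 0 0 (gproj P h) :> 'M[k]_(m + n).
Proof.
apply/matrixP => i j; rewrite /gproj /gr_sum.
by case: (split_ordP i) => a ->; case: (split_ordP j) => b ->;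
  block_simpl; rewrite ?eq_shift ?mxE.
Qed.

Lemma ract_dsumX R S m :
  ract (dsum R S) ^+ m = block_mx (ract R ^+ m) 0 0 (ract S ^+ m).
Proof.
elim: m => [|m IHm]; first by rewrite !expr0 -scalar_mx_block.
rewrite !exprS IHm -!mulmxE /= mulmx_block.
by rewrite !mulmx0 !mul0mx !addr0 !add0r.
Qed.

Lemma grank_dsum R S P m : grank (dsum R S) P m = (grank R P m + grank S P m)%N.
Proof.
rewrite /grank ract_dsumX (gproj_sum P (rgr R) (rgr S)) mulmx_block.
by rewrite !mulmx0 !mul0mx !addr0 !add0r rank_diag_block_mx.
Qed.

Lemma riso_dsum R R' S S' :
  riso R R' -> riso S S' -> riso (dsum R S) (dsum R' S').
Proof.
case=> f [g [hf hg fg gf]] [f' [g' [hf' hg' fg' gf']]].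
exists (block_mx f 0 0 f'), (block_mx g 0 0 g').
rewrite !mulmx_block !mulmx0 !mul0mx !addr0 !add0r fg fg' gf gf'.
rewrite -!scalar_mx_block; split=> //; split; rewrite /= ?mulmx_block;
  rewrite ?mulmx0 ?mul0mx ?addr0 ?add0r.
- exact: (homog_block (s := id) hf.1 hf'.1).
- by rewrite hf.2 hf'.2.
- exact: (homog_block (s := id) hg.1 hg'.1).
- by rewrite hg.2 hg'.2.
Qed.

Lemma riso_reindex R S (sg : 'I_(rdim R) -> 'I_(rdim S))
    (tu : 'I_(rdim S) -> 'I_(rdim R)) :
  cancel sg tu -> cancel tu sg -> (forall i, rgr S (sg i) = rgr R i) ->
  (forall i j, ract S (sg i) (sg j) = ract R i j) -> riso R S.
Proof.
move=> sgK tuK gr_sg act_sg.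
have gr_tu i : rgr R (tu i) = rgr S i by rewrite -gr_sg tuK.
have sgE : rowsub sg (1%:M : 'M[k]_(rdim S)) = colsub tu 1%:M.
  apply/matrixP => i j; rewrite !mxE.
  by apply/congr1/congr1; apply/eqP/eqP => [<-|->]; rewrite ?sgK ?tuK.
have tuE : rowsub tu (1%:M : 'M[k]_(rdim R)) = colsub sg 1%:M.
  apply/matrixP => i j; rewrite !mxE.
  by apply/congr1/congr1; apply/eqP/eqP => [<-|->]; rewrite ?sgK ?tuK.
exists (rowsub sg 1%:M), (rowsub tu 1%:M); split.
- split=> [i j|].
    by rewrite !mxE; have [<- _|_] := eqVneq (sg i) j; rewrite ?gr_sg ?eqxx.
  rewrite mul_rowsub_mx mul1mx sgE mulmx_colsub mulmx1.
  by apply/matrixP => i j; rewrite !mxE -act_sg tuK.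
- split=> [i j|].
    by rewrite !mxE; have [<- _|_] := eqVneq (tu i) j; rewrite ?gr_tu ?eqxx.
  rewrite mul_rowsub_mx mul1mx tuE mulmx_colsub mulmx1.
  by apply/matrixP => i j; rewrite !mxE -act_sg tuK.
- by rewrite mul_rowsub_mx mul1mx; apply/matrixP => i j; rewrite !mxE sgK.
- by rewrite mul_rowsub_mx mul1mx; apply/matrixP => i j; rewrite !mxE tuK.
Qed.

Lemma riso_dsumC R S : riso (dsum R S) (dsum S R).
Proof.
pose sw m n (i : 'I_(m + n)) : 'I_(n + m) :=
  match split i with inl a => rshift n a | inr b => lshift m b end.
apply: (@riso_reindex (dsum R S) (dsum S R) (@sw _ _) (@sw _ _))
  => [i|i|i|i j]; rewrite /sw; case: (split_ordP i) => a ->;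
  try case: (split_ordP j) => b ->; by block_simpl.
Qed.

Lemma riso_dsumA R S T : riso (dsum (dsum R S) T) (dsum R (dsum S T)).
Proof.
pose sg (i : 'I_(rdim R + rdim S + rdim T)) : 'I_(rdim R + (rdim S + rdim T)) :=
  match split i with
  | inl x => match split x with inl y => lshift _ y | inr z => rshift _ (lshift _ z) end
  | inr w => rshift _ (rshift _ w) end.
pose tu (i : 'I_(rdim R + (rdim S + rdim T))) : 'I_(rdim R + rdim S + rdim T) :=
  match split i with
  | inl y => lshift _ (lshift _ y)
  | inr x => match split x with inl z => lshift _ (rshift _ z) | inr w => rshift _ w end
  end.
apply: (@riso_reindex (dsum (dsum R S) T) (dsum R (dsum S T)) sg tu)
  => [i|i|i|i j]; rewrite /sg /tu; case: (split_ordP i) => a ->;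
  try case: (split_ordP j) => b ->;
  try case: (split_ordP a) => c ->; try case: (split_ordP b) => d ->;
  by block_simpl.
Qed.

Lemma riso_dsum0l R : riso (dsum zero_rep R) R.
Proof.
apply: (@riso_reindex (dsum zero_rep R) R (fun i => i) (fun i => i)) => //.
- move=> i; case: (split_ordP i) => [[]//|] a ->.
  by block_simpl; congr (rgr R _); apply: val_inj.
- move=> i j; case: (split_ordP i) => [[]//|] a ->; case: (split_ordP j) => [[]//|] b ->.
  by block_simpl; congr (ract R _ _); apply: val_inj.
Qed.

Lemma bigdsum_cat (rs ts : seq (rep k l)) :
  riso (bigdsum (rs ++ ts)) (dsum (bigdsum rs) (bigdsum ts)).
Proof.
elim: rs => [|r rs IHrs] /=; first exact/riso_sym/riso_dsum0l.
exact: riso_trans (riso_dsum (riso_refl r) IHrs) (riso_sym (riso_dsumA _ _ _)).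
Qed.

Lemma bigdsum_perm (T : eqType) (F : T -> rep k l) (s t : seq T) :
  perm_eq s t -> riso (bigdsum (map F s)) (bigdsum (map F t)).
Proof.
elim: s t => [|x s IHs] t.
  by rewrite perm_sym => /perm_nilP ->; apply: riso_refl.
move=> pst; have xt : x \in t by rewrite -(perm_mem pst) mem_head.
move: pst; case/splitPr: xt => t1 t2 pst.
have /IHs iso_s : perm_eq s (t1 ++ t2).
  by rewrite -(perm_cons x); apply: (perm_trans pst); rewrite -cat1s perm_catCA.
have swap3 (A B C : rep k l) : riso (dsum A (dsum B C)) (dsum B (dsum A C)).
  apply: riso_trans (riso_sym (riso_dsumA _ _ _)) _.
  exact: riso_trans (riso_dsum (riso_dsumC _ _) (riso_refl _)) (riso_dsumA _ _ _).
rewrite map_cat /=; apply: riso_trans (riso_sym (bigdsum_cat _ _)).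
apply: riso_trans (riso_sym (swap3 _ _ _)).
apply: riso_dsum (riso_refl _) _.
by apply: riso_trans iso_s _; rewrite map_cat; apply: bigdsum_cat.
Qed.

End DirectSums.

(* The minimal polynomial of a nilpotent matrix is a power of X dividing the
   characteristic polynomial. *)
Lemma mx_nilpotent_dim (F : fieldType) n (A : 'M[F]_n) e :
  A ^+ e = 0 -> A ^+ n = 0.
Proof.
case: n A => [|n] A Ae; first by apply/matrixP => [[]].
have : mxminpoly A %| ('X - 0%:P) ^+ e.
  by apply: mxminpoly_min; rewrite subr0 rmorphXn /= horner_mx_X.
case/dvdp_exp_XsubCP => d _; rewrite subr0 eqp_monic ?monicXn ?mxminpoly_monic //.
move=> /eqP minA; have Ad : A ^+ d = 0.
  by have := mx_root_minpoly A; rewrite minA rmorphXn /= horner_mx_X.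
have : (size (mxminpoly A) <= size (char_poly A))%N.
  by rewrite dvdp_leq ?mxminpoly_dvd_char ?monic_neq0 ?char_poly_monic.
rewrite minA size_polyXn size_char_poly ltnS => le_dn.
by rewrite -[X in A ^+ X](subnK le_dn) exprD Ad mulr0.
Qed.

Section Loewy.
Variables (k : fieldType) (l : nat).
Implicit Types R S : rep k l.

Let has_loewy R : nilpotent_rep R ->
  has (fun m => ract R ^+ m == 0) (iota 0 (rdim R).+1).
Proof.
case=> e /mx_nilpotent_dim Rn0.
by apply/hasP; exists (rdim R); rewrite ?mem_iota //= Rn0.
Qed.

Lemma loewy_exp0 R : nilpotent_rep R -> ract R ^+ loewy R = 0.
Proof.
move=> /has_loewy hasR; have := nth_find 0%N hasR.
by rewrite nth_iota ?add0n => [/eqP//|]; move: hasR; rewrite has_find size_iota.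
Qed.

Lemma loewy_min R m : nilpotent_rep R -> (m < loewy R)%N -> ract R ^+ m != 0.
Proof.
move=> /has_loewy hasR lt_mL; have := before_find 0%N lt_mL.
rewrite nth_iota ?add0n => [->//|].
by apply: ltn_trans lt_mL _; move: hasR; rewrite has_find size_iota.
Qed.

Lemma loewy_gt0 R : nilpotent_rep R -> (0 < rdim R)%N -> (0 < loewy R)%N.
Proof.
move=> nilR R_gt0; rewrite lt0n; apply/eqP => L0; have := loewy_exp0 nilR.
rewrite L0 expr0 => /matrixP/(_ (Ordinal R_gt0) (Ordinal R_gt0)).
by rewrite !mxE eqxx => /eqP; rewrite oner_eq0.
Qed.

Lemma nilpotent_riso R S : riso R S -> nilpotent_rep R -> nilpotent_rep S.
Proof.
case=> f [g [hf _ _ gf]] [e Re0]; exists e.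
by rewrite -[LHS]mul1mx -gf -mulmxA -(intertwineX _ hf.2) Re0 mul0mx mulmx0.
Qed.

Lemma nilpotent_dsum R S : nilpotent_rep R -> nilpotent_rep S -> nilpotent_rep (dsum R S).
Proof.
case=> a Ra [b Sb]; exists (a + b)%N.
by rewrite ract_dsumX !exprD Ra Sb mul0r mulr0 block_mx0.
Qed.

Lemma nilpotent_bigdsum (rs : seq (rep k l)) :
  nilpotent_rep (bigdsum rs) -> forall r, List.In r rs -> nilpotent_rep r.
Proof.
elim: rs => [|r0 rs IHrs] //= [e]; rewrite ract_dsumX => sum0.
have [r0e rse] : ract r0 ^+ e = 0 /\ ract (bigdsum rs) ^+ e = 0.
  by move/eqP: sum0; rewrite -block_mx0 => /eqP/eq_block_mx[].
by move=> r [<-|]; [exists e | apply: IHrs; exists e].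
Qed.

End Loewy.

Lemma sum_delta (F : fieldType) n (a : nat) (f : 'I_n -> F) :
  \sum_(t < n) ((a == t :> nat)%:R * f t) =
  if insub a is Some t then f t else 0.
Proof.
case: insubP => [t _ <-|a_ge].
  rewrite (bigD1 t) //= eqxx mul1r big1 ?addr0 // => t' /negbTE.
  by rewrite eq_sym -val_eqE => ->; rewrite mul0r.
rewrite big1 // => t _; rewrite (_ : (a == t) = false) ?mul0r //.
by apply/negbTE; apply: contra a_ge => /eqP ->.
Qed.

Lemma rank_diag_bool (F : fieldType) n (e : nat -> bool) :
  \rank (diag_mx (\row_(i < n) (e i)%:R) : 'M[F]_n) = count e (iota 0 n).
Proof.
elim: n e => [|n IHn] e; first by apply/eqP; rewrite -leqn0 rank_leq_row.
have -> : (diag_mx (\row_(i < n.+1) (e i)%:R) : 'M[F]_n.+1) =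
          block_mx (diag_mx (\row_(i < 1) (e i)%:R)) 0 0
                   (diag_mx (\row_(i < n) (e i.+1)%:R)) :> 'M[F]_(1 + n).
  rewrite -diag_mx_row; congr diag_mx.
  by apply/matrixP => a b; rewrite !mxE; case: split_ordP => c ->; rewrite !mxE.
rewrite (rank_diag_block_mx (m := 1) (n := 1) (p := n) (q := n)) (IHn (e \o S)).
rewrite /= (iotaDl 1 0) count_map rank_rV; congr (nat_of_bool _ + _)%N.
case e0: (e 0%N); apply/eqP.
  by move/matrixP/(_ 0 0); rewrite !mxE /= e0 mulr1n => /eqP; rewrite oner_eq0.
by apply/matrixP => a b; rewrite !mxE !ord1 /= e0 mul0rn.
Qed.

Section Strings.
Variables (k : fieldType) (l : nat).
Local Notation V := 'I_l.+1.

Definition shift_mx n : 'M[k]_n := \matrix_(i, j) ((i.+1 == j :> nat)%:R).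

Lemma shift_mxX n m :
  shift_mx n ^+ m = \matrix_(i, j) (((i + m)%N == j :> nat)%:R).
Proof.
elim: m => [|m IHm]; first by apply/matrixP => i j; rewrite expr0 !mxE addn0.
rewrite exprS -mulmxE IHm; apply/matrixP => i j; rewrite !mxE.
under eq_bigr do rewrite !mxE.
rewrite sum_delta -addSnnS; case: insubP => [t _ -> //|i_ge] /=.
case: eqP => // ij; move: i_ge; rewrite -ltnNge => /(leq_trans (ltn_ord j)).
by rewrite -ij ltnNge leq_addr.
Qed.

Definition vstep (v : V) (j : nat) : V := iter j (@ordS l.+1) v.

Definition string_rep (v : V) n : rep k l := @Rep k l n (vstep v \o val) (shift_mx n).

Lemma is_rep_string v n : is_rep (string_rep v n).
Proof.
move=> i j; rewrite /= mxE; have [<- _|_] := eqVneq (i.+1) j; last by rewrite eqxx.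
exact: iterS.
Qed.

Lemma count_take_add (a : pred nat) n m :
  count (fun i => a i && (i + m < n)%N) (iota 0 n) = count a (iota 0 (n - m)).
Proof.
have [le_mn|lt_nm] := leqP m n; last first.
  rewrite (_ : n - m = 0)%N; last by apply/eqP; rewrite subn_eq0 ltnW.
  rewrite (@eq_in_count _ _ pred0) ?count_pred0 // => i _ /=.
  by case: (a i) => //=; apply/negbTE; rewrite -leqNgt; lia.
rewrite -[X in iota 0 X](subnK le_mn) iotaD count_cat add0n.
rewrite (@eq_in_count _ _ pred0 (iota _ m)) ?count_pred0 ?addn0 => [|i]; last first.
  rewrite mem_iota => /andP[? ?] /=.
  by case: (a i) => //=; apply/negbTE; rewrite -leqNgt; lia.
apply: eq_in_count => i; rewrite mem_iota => /andP[_ ?] /=.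
by case: (a i) => //=; lia.
Qed.

Lemma grank_string v n P m :
  grank (string_rep v n) P m = count (fun j => P (vstep v j)) (iota 0 (n - m)).
Proof.
rewrite /grank /= shift_mxX; set Y := _ *m _.
pose e i := P (vstep v i) && (i + m < n)%N.
pose D : 'M[k]_n := diag_mx (\row_(i < n) (e i)%:R).
pose Z : 'M[k]_n := \matrix_(i, j) (((i + m)%N == j :> nat)%:R).
have YDZ : Y = D *m Z.
  apply/matrixP => i j; rewrite /Y gproj_mull mul_diag_mx !mxE /e.
  by case: eqP => [ij|]; rewrite ?ij ?ltn_ord ?andbT ?mulr0.
have DYZ : D = Y *m Z^T.
  apply/matrixP => i j; rewrite [in RHS]mxE.
  under eq_bigr do rewrite /Y gproj_mull !mxE -mulrA.
  rewrite -mulr_sumr sum_delta !mxE /e; case: insubP => [t -> tE|/negbTE->] /=.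
    by rewrite tE eqn_add2r mulr_natr andbT eq_sym.
  by rewrite andbF mulr0 mul0rn.
rewrite -count_take_add -[count _ _]/(count e (iota 0 n)) -(rank_diag_bool k n e).
by apply/eqP; rewrite eqn_leq {1}YDZ mxrankM_maxl /= -/D DYZ mxrankM_maxl.
Qed.

End Strings.
Arguments string_rep {k l}.

Section Summands.
Variables (k : fieldType) (l : nat).
Implicit Types R S : rep k l.

Lemma idempotent_summand R (q : 'M[k]_(rdim R)) :
  is_rep R -> homog (rgr R) (rgr R) id q -> q *m ract R = ract R *m q ->
  q *m q = q ->
  exists W (b : 'M[k]_(rdim W, rdim R)) (c : 'M[k]_(rdim R, rdim W)),
    [/\ is_rep W, rhom b, rhom c, c *m b = q & b *m c = 1%:M] /\
    rdim W = \rank q.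
Proof.
move=> repR hq qA qq; set f := maxrankfun q.
pose b := rowsub f q; pose gW i := rgr R (f i).
have freeb : row_free b := maxrowsub_free q.
have eqbq : (b :=: q)%MS := eq_maxrowsub q.
have hb : homog gW (rgr R) id b by move=> i j; rewrite mxE => /hq.
have qb : (q <= b)%MS by rewrite eqbq.
have bA : (b *m ract R <= b)%MS.
  by rewrite mul_rowsub_mx qA rowsubE eqbq (submx_trans (submxMl _ _)) ?submxMl.
have bq : b *m q = b by rewrite mul_rowsub_mx qq.
have hbA := homog_pinv (@ordS_inj _) freeb hb (homogM hb repR) bA.
have hc := homog_pinv (@inj_id _) freeb hb hq qb.
have qbK := mulmxKpV qb; have bAK := mulmxKpV bA; have bp := mulmxVp freeb.
move: (pinvmx b) qbK bAK bp hbA hc => p qbK bAK bp hbA hc.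
exists (@Rep k l _ gW (b *m ract R *m p)), b, (q *m p).
split=> //; split.
- exact: hbA.
- by split=> [i j nz|]; [exact: hb nz | exact: bAK].
- by split=> [i j nz|]; [exact: hc nz | rewrite /= !mulmxA qbK qA].
- exact: qbK.
- by rewrite mulmxA bq bp.
Qed.

Lemma retract_dsum R S (f : 'M[k]_(rdim S, rdim R)) (g : 'M[k]_(rdim R, rdim S)) :
  is_rep R -> rhom f -> rhom g -> f *m g = 1%:M ->
  exists W, [/\ is_rep W, riso R (dsum S W) & rdim W = \rank (1%:M - g *m f)].
Proof.
move=> repR hf hg fg; set q := 1%:M - g *m f.
have fq : f *m q = 0 by rewrite mulmxBr mulmx1 mulmxA fg mul1mx subrr.
have qg : q *m g = 0 by rewrite mulmxBl mul1mx -mulmxA fg mulmx1 subrr.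
have qq : q *m q = q by rewrite {2}/q mulmxBr mulmx1 mulmxA qg mul0mx subr0.
have hq : homog (rgr R) (rgr R) id q.
  exact: homogD (homog1 _) (homogN (homogM hg.1 hf.1 : homog _ _ id _)).
have qA : q *m ract R = ract R *m q.
  by rewrite mulmxBl mulmxBr mul1mx mulmx1 -mulmxA -hf.2 !mulmxA hg.2.
have [W [b [c [[repW hb hc cb bc] dimW]]]] := idempotent_summand repR hq qA qq.
have bq : b = b *m q by rewrite -cb mulmxA bc mul1mx.
have qc : c = q *m c by rewrite -cb -mulmxA bc mulmx1.
exists W; split=> //; exists (row_mx g c), (col_mx f b); split.
- split; first exact: (homog_row (s := id) hg.1 hc.1).
  by rewrite /= mul_mx_row mul_row_block !mulmx0 !addr0 !add0r hg.2 hc.2.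
- split; first exact: (homog_col (s := id) hf.1 hb.1).
  by rewrite /= mul_block_col !mul0mx !addr0 !add0r mul_col_mx hf.2 hb.2.
- by rewrite mul_row_col cb addrC subrK.
- rewrite mul_col_row fg bc qc mulmxA fq mul0mx bq -mulmxA qg mulmx0.
  by rewrite -scalar_mx_block.
Qed.

End Summands.

Section StringSummand.
Variables (k : fieldType) (l : nat) (R : rep k l).
Hypotheses (repR : is_rep R) (nilR : nilpotent_rep R).
Variables (b c : 'I_(rdim R)).
Local Notation n := (rdim R).
Local Notation A := (ract R).
Local Notation L := (loewy R).
Hypothesis top_bc : (A ^+ L.-1) b c != 0.

Definition orbit_mx : 'M[k]_(L, n) := \matrix_(j, x) (A ^+ j) b x.
Definition coorbit_mx : 'M[k]_(n, L) := \matrix_(x, j) (A ^+ (L.-1 - j)) x c.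

Local Notation S := (string_rep (rgr R b) L).

Let L_gt0 : (0 < L)%N.
Proof. by apply: loewy_gt0 nilR _; apply: leq_ltn_trans (ltn_ord b). Qed.

Let expr_loewy j : (L <= j)%N -> A ^+ j = 0.
Proof. by move=> le_Lj; rewrite -(subnK le_Lj) exprD loewy_exp0 // mulr0. Qed.

Lemma rhom_orbit : @rhom k l S R orbit_mx.
Proof.
split=> [j x|]; first by rewrite mxE => /(rep_exp_homog (m := j) repR).
apply/matrixP => j x; rewrite !mxE.
under eq_bigr do rewrite !mxE.
under [RHS]eq_bigr do rewrite !mxE.
have -> : \sum_z (A ^+ j) b z * A z x = (A ^+ j.+1) b x.
  by rewrite exprSr -mulmxE mxE.
by rewrite sum_delta; case: insubP => [t _ -> //| out]; rewrite expr_loewy ?mxE // leqNgt.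
Qed.

Lemma rhom_coorbit : @rhom k l R S coorbit_mx.
Proof.
split=> [x j|].
  rewrite mxE => /(rep_exp_homog (m := L.-1 - j) repR) cx.
  have := rep_exp_homog (m := L.-1) repR top_bc; rewrite cx /= /vstep.
  have le_jL : (j <= L.-1)%N by rewrite -ltnS prednK.
  rewrite -[in X in _ = X -> _](subnK le_jL) iterD.
  by move/(iter_inj (@ordS_inj _)) ->.
apply/matrixP => x j; rewrite !mxE.
under eq_bigr do rewrite !mxE.
under [RHS]eq_bigr do rewrite !mxE mulrC eq_sym.
have -> : \sum_z A x z * (A ^+ (L.-1 - j)) z c = (A ^+ (L.-1 - j).+1) x c.
  by rewrite exprS -mulmxE mxE.
case: j => [[|j] lt_jL] /=.
  by rewrite subn0 prednK // loewy_exp0 // mxE big1 // => t _; rewrite mul0r.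
under eq_bigr do rewrite eqSS.
rewrite sum_delta; case: insubP => [t _ -> | ]; last by rewrite ltnW.
by rewrite subnSK // -ltnS prednK.
Qed.

(* The product has entries [(A^(i + L-1-j))_bc]: it is triangular with
   diagonal [(A^(L-1))_bc], as [A^L = 0]. *)
Lemma orbit_coorbit_unit : orbit_mx *m coorbit_mx \in unitmx.
Proof.
have GE i j : (orbit_mx *m coorbit_mx) i j = (A ^+ (i + (L.-1 - j))) b c.
  by rewrite !mxE; under eq_bigr do rewrite !mxE; rewrite exprD -mulmxE mxE.
rewrite unitmxE unitfE -det_tr det_trig; last first.
  apply/is_trig_mxP => i j lt_ij; rewrite mxE GE expr_loewy ?mxE //.
  by move: lt_ij (ltn_ord j) L_gt0; lia.
rewrite (eq_bigr (fun _ => (A ^+ L.-1) b c)) => [|i _]; last first.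
  by rewrite mxE GE subnKC // -ltnS prednK.
by rewrite prodr_const expf_neq0.
Qed.

End StringSummand.

Lemma indecomposable_string (k : fieldType) (l : nat) (R : rep k l) :
  nilpotent_rep R -> indecomposable R -> exists v, riso R (string_rep v (loewy R)).
Proof.
move=> nilR [repR [R_gt0 indR]]; have L_gt0 := loewy_gt0 nilR R_gt0.
have /matrix0Pn[b [c top_bc]] : ract R ^+ (loewy R).-1 != 0.
  by apply: loewy_min; rewrite // ltn_predL.
have unitG := orbit_coorbit_unit nilR top_bc.
set f := orbit_mx b; set g := coorbit_mx c *m invmx (f *m coorbit_mx c).
pose S : rep k l := string_rep (rgr R b) (loewy R).
have hf : @rhom k l S R f := rhom_orbit repR nilR b.
have hg : @rhom k l R S g.
  apply: rhomM (rhom_coorbit repR nilR top_bc) _.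
  apply: rhom_inv (rhomM hf (rhom_coorbit repR nilR top_bc)) _ _.
    exact: mulmxV.
  exact: mulVmx.
have fg : f *m g = 1%:M by rewrite mulmxA mulmxV.
have [W [repW isoRSW dimW]] := retract_dsum repR hf hg fg.
have [/= L0|W0] := indR S W (@is_rep_string _ _ _ _) repW isoRSW.
  by rewrite L0 in L_gt0.
exists (rgr R b), g, f; split=> //; apply/eqP.
by rewrite eq_sym -subr_eq0 -mxrank_eq0 -dimW W0.
Qed.

(* The rows of [D *m Y] and of [(1 - D) *m Y] lie in the complementary images
   of the projector [E]. *)
Lemma mxrank_proj_split (F : fieldType) m n (D : 'M[F]_m) (E : 'M[F]_n)
    (Y : 'M[F]_(m, n)) :
  E *m E = E -> D *m Y = Y *m E ->
  (\rank (D *m Y) + \rank ((1%:M - D) *m Y))%N = \rank Y.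
Proof.
move=> EE DYE; have DYC : (1%:M - D) *m Y = Y *m (1%:M - E).
  by rewrite mulmxBl mulmxBr mul1mx mulmx1 DYE.
rewrite -mxrank_disjoint_sum.
  apply: eqmx_rank; apply/andP; split.
    by rewrite addsmx_sub !submxMl.
  by rewrite -{1}[Y](subrK (D *m Y)) addrC -{2}[Y]mul1mx -mulmxBl addmx_sub_adds.
apply/eqP; rewrite -submx0; apply/rV_subP => v.
rewrite sub_capmx DYE DYC => /andP[/submxP[a ->] /submxP[b vE]].
have vEv : a *m (Y *m E) *m E = a *m (Y *m E) by rewrite -!mulmxA EE.
by rewrite -vEv vE -!mulmxA mulmxBl mul1mx EE subrr !mulmx0 sub0mx.
Qed.

Section Invariants.
Variables (k : fieldType) (l : nat).
Local Notation V := 'I_l.+1.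
Implicit Types R N X M : rep k l.

Definition strings_rep (s : seq (V * nat)) : rep k l :=
  bigdsum (map (fun x => string_rep x.1 x.2) s).

Lemma mu_of_strings R p : nilpotent_rep R -> mu_of R p ->
  exists s, [/\ riso R (strings_rep s), p = sort geq (map snd s) &
                all (fun x => 0 < x.2)%N s].
Proof.
move=> nilR [rs [indrs isoR ->]].
have nilrs := nilpotent_bigdsum (nilpotent_riso isoR nilR).
suff [s [isos mapS pos]] : exists s, [/\ riso (bigdsum rs) (strings_rep s),
    map snd s = map (@loewy k l) rs & all (fun x => 0 < x.2)%N s].
  by exists s; rewrite mapS; split=> //; apply: riso_trans isoR isos.
elim: rs indrs nilrs {isoR} => [|r rs IHrs] indrs nilrs.
  by exists [::]; split=> //; apply: riso_refl.
have indr := indrs r (or_introl erefl); have nilr := nilrs r (or_introl erefl).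
have [v isor] := indecomposable_string nilr indr.
have [s [isos mapS pos]] := IHrs (fun r' h => indrs r' (or_intror h))
                                  (fun r' h => nilrs r' (or_intror h)).
exists ((v, loewy r) :: s); split=> /=; first exact: riso_dsum.
  by rewrite mapS.
by rewrite pos andbT loewy_gt0 //; case: indr => _ [].
Qed.

Lemma grank_strings s P m :
  grank (strings_rep s) P m =
  \sum_(x <- s) count (fun j => P (vstep x.1 j)) (iota 0 (x.2 - m)).
Proof.
elim: s => [|x s IHs]; last by rewrite big_cons /= grank_dsum grank_string IHs.
by rewrite big_nil; apply/eqP; rewrite -leqn0 rank_leq_row.
Qed.

Lemma grank_ses N X M P m : ses N X M -> (grank M P m + grank N P m <= grank X P m)%N.
Proof.
case=> i [p [hi hp freei fullp /andP[ker_i _]]].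
set Y := gproj P (rgr X) *m ract X ^+ m.
have Yp : Y *m p = p *m (gproj P (rgr M) *m ract M ^+ m).
  by rewrite /Y -mulmxA (intertwineX _ hp.2) [LHS]mulmxA (rhom_gproj P hp) mulmxA.
have rankYp : \rank (Y *m p) = grank M P m.
  apply/eqP; rewrite Yp /grank eqn_leq mxrankM_maxr /=; case/row_fullP: fullp => q qp.
  by rewrite -{1}[gproj _ _ *m _]mul1mx -qp -mulmxA mxrankM_maxr.
have rank_iY : \rank (i *m Y) = grank N P m.
  rewrite /Y mulmxA -(rhom_gproj P hi) -mulmxA -(intertwineX _ hi.2) mulmxA.
  by rewrite mxrankMfree.
have iY_ker : (i *m Y <= Y :&: kermx p)%MS.
  rewrite sub_capmx submxMl; apply/sub_kermxP.
  by rewrite -mulmxA Yp mulmxA (sub_kermxP ker_i) mul0mx.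
rewrite -rankYp -rank_iY -[grank X P m]/(\rank Y) -(mxrank_mul_ker Y p).
by rewrite leq_add2l mxrankS.
Qed.

Lemma nilpotent_ses N X M : ses N X M -> nilpotent_rep M -> nilpotent_rep N ->
  nilpotent_rep X.
Proof.
case=> i [p [hi hp _ _ /andP[_ ker_i]]] [a Ma] [b Nb]; exists (a + b)%N.
have /submxP[Z XaZ] : (ract X ^+ a <= i)%MS.
  by apply: submx_trans ker_i; apply/sub_kermxP; rewrite (intertwineX _ hp.2) Ma mulmx0.
by rewrite exprD -mulmxE XaZ -mulmxA -(intertwineX _ hi.2) Nb mul0mx mulmx0.
Qed.

Lemma grank_vertex_split R v m : is_rep R ->
  (grank R (pred1 v) m + grank R (predC1 v) m)%N = grank R predT m.
Proof.
move=> repR; rewrite /grank gprojT mul1mx.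
have -> : gproj (predC1 v) (rgr R) = 1%:M - gproj (pred1 v) (rgr R) :> 'M[k]_(rdim R).
  by rewrite gprojC.
apply: (mxrank_proj_split (E := gproj (pred1 (iter m (@ordS l.+1) v)) (rgr R))).
  by rewrite gproj_mul; apply/matrixP => i j; rewrite !mxE /= andbb.
apply: homog_gproj (rep_exp_homog repR) _ => w /=.
by rewrite (inj_eq (iter_inj (@ordS_inj _))).
Qed.

End Invariants.
Arguments strings_rep {k l}.

Local Close Scope ring_scope.

(* [excess p m] is the sum of the parts of the conjugate partition beyond the
   [m]-th one. *)
Definition excess (p : seq nat) m := \sum_(x <- p) (x - m).

Lemma excess_cons a p m : excess (a :: p) m = a - m + excess p m.
Proof. exact: big_cons. Qed.

Lemma excess_sort p m : excess (sort geq p) m = excess p m.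
Proof. by apply: perm_big; rewrite perm_sort. Qed.

Lemma excess_head a p : sorted geq (a :: p) -> excess p a = 0.
Proof.
move=> /(order_path_min (rev_trans leq_trans)).
move=> /allP le_pa; rewrite /excess big_seq big1 // => x /le_pa.
by rewrite -subn_eq0 => /eqP.
Qed.

Lemma part_lt_cons a p q : part_lt p q -> part_lt (a :: p) (a :: q).
Proof.
case=> neq_pq [i [eq_pq lt_i]]; split; first by case.
by exists i.+1; split=> // [[|j]] //= /eq_pq.
Qed.

Lemma part_le_of_excess p q : sorted geq p -> sorted geq q ->
  all (fun x => 0 < x) p -> all (fun x => 0 < x) q ->
  (forall m, excess q m <= excess p m) -> part_le p q.
Proof.
elim: p q => [|a p IHp] [|b q] //= sp sq pos_p pos_q le_qp; first by left.
- case/andP: pos_q => b_gt0 _; have := le_qp 0.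
  rewrite excess_cons subn0 [excess [::] 0]big_nil leqn0 addn_eq0.
  by case/andP=> /eqP b0; rewrite b0 in b_gt0.
- by right; split=> //; exists 0; split=> //; case/andP: pos_p.
have [lt_ab|lt_ba|eq_ab] := ltngtP a b.
- have := le_qp a; rewrite !excess_cons subnn (excess_head sp).
  by rewrite leqn0 addn_eq0 subn_eq0 leqNgt lt_ab.
- by right; split; [case=> eq_ab; rewrite eq_ab ltnn in lt_ba | exists 0].
subst b; case/andP: pos_p => _ pos_p; case/andP: pos_q => _ pos_q.
have le_qp' m : excess q m <= excess p m.
  by have := le_qp m; rewrite !excess_cons leq_add2l.
have [->|lt_pq] := IHp q (path_sorted sp) (path_sorted sq) pos_p pos_q le_qp'.
  by left.
by right; apply: part_lt_cons.
Qed.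

Lemma part_lt_asym p q : part_lt p q -> ~ part_lt q p.
Proof.
case=> _ [i [eq_i lt_i]] [_ [j [eq_j lt_j]]].
have [lt_ij|lt_ji|eq_ij] := ltngtP i j.
- by rewrite (eq_j _ lt_ij) ltnn in lt_i.
- by rewrite (eq_i _ lt_ji) ltnn in lt_j.
- by subst j; have := ltn_trans lt_i lt_j; rewrite ltnn.
Qed.

Lemma part_eq_of_excess p q : sorted geq p -> sorted geq q ->
  all (fun x => 0 < x) p -> all (fun x => 0 < x) q ->
  (forall m, excess q m = excess p m) -> p = q.
Proof.
move=> sp sq pos_p pos_q eq_qp.
have [//|lt_pq] := part_le_of_excess sp sq pos_p pos_q (fun m => eq_leq (eq_qp m)).
have [//|lt_qp] := part_le_of_excess sq sp pos_q pos_p (fun m => eq_leq (esym (eq_qp m))).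
by case: (part_lt_asym lt_pq lt_qp).
Qed.

Section StringCounts.
Variable l : nat.
Local Notation V := 'I_l.+1.
Implicit Types (x : V * nat) (s t : seq (V * nat)).

Definition vcount x (v : V) m :=
  count (fun j => vstep x.1 j == v) (iota 0 (x.2 - m)).

Definition vcounts s v m := \sum_(x <- s) vcount x v m.

Lemma count_iotaS (a : pred nat) n :
  count a (iota 0 n.+1) = count a (iota 0 n) + a n.
Proof. by rewrite -addn1 iotaD count_cat /= add0n addn0. Qed.

Lemma vstepS_eq (v w : V) j : (vstep v j.+1 == w) = (vstep v j == ord_pred w).
Proof. by rewrite /vstep /=; apply/eqP/eqP => [<-|->]; rewrite ?ordSK ?ord_predK. Qed.

(* Only the string [(v, m + 1)] contributes differently to the two sides. *)
Lemma vcount_step x v m :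
  vcount x v m + vcount x (ord_pred v) m.+2 =
  vcount x v m.+1 + vcount x (ord_pred v) m.+1 + (x == (v, m.+1)).
Proof.
case: x => v0 n; rewrite /vcount /= xpair_eqE.
have [le_nm|lt_mn] := leqP n m.
  have [-> -> ->] : [/\ n - m = 0, n - m.+1 = 0 & n - m.+2 = 0] by split; lia.
  rewrite (_ : (n == m.+1) = false) ?andbF //.
  by apply/negbTE; rewrite neq_ltn ltnS le_nm.
have [->|ne_nm] := eqVneq n m.+1.
  rewrite subSnn subnn (_ : m.+1 - m.+2 = 0) ?eqxx ?andbT; last by lia.
  by rewrite /= !addn0.
rewrite andbF addn0.
have [-> ->] : n - m = (n - m.+2).+2 /\ n - m.+1 = (n - m.+2).+1 by split; lia.
by rewrite !count_iotaS vstepS_eq -!addnA; congr (_ + (_ + _)); rewrite addnC.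
Qed.

Lemma vcounts_step s v m :
  vcounts s v m + vcounts s (ord_pred v) m.+2 =
  vcounts s v m.+1 + vcounts s (ord_pred v) m.+1 + count_mem (v, m.+1) s.
Proof.
elim: s => [|x s IHs]; first by rewrite /vcounts !big_nil.
rewrite /vcounts !big_cons /= -!/(vcounts _ _ _).
move: IHs (vcount_step x v m); rewrite eq_sym; move: (_ == x) => e.
by set c := count_mem _ s; lia.
Qed.

Lemma perm_eq_vcounts s t :
  all (fun x => 0 < x.2) s -> all (fun x => 0 < x.2) t ->
  (forall v m, vcounts s v m = vcounts t v m) -> perm_eq s t.
Proof.
move=> pos_s pos_t eq_st; apply/allP => -[v [|m]] _ /=; apply/eqP.
  have no0 u : all (fun x => 0 < x.2) u -> count_mem (v, 0) u = 0.
    move=> pos_u; apply/eqP; rewrite -leqn0 leqNgt -has_count.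
    by apply/hasPn => -[w n] /(allP pos_u) /=; rewrite xpair_eqE andbC; case: n.
  by rewrite !no0.
have := vcounts_step s v m; rewrite !eq_st vcounts_step.
by move/eqP; rewrite eqn_add2l => /eqP.
Qed.
End StringCounts.

Section Extensions.
Variables (k : fieldType) (l : nat).
Implicit Types (R N X M : rep k l) (s : seq ('I_l.+1 * nat)).

Lemma grank_predT_strings R s m :
  riso R (strings_rep s) -> grank R predT m = excess (sort geq (map snd s)) m.
Proof.
move=> isoR; rewrite (grank_riso _ _ isoR) grank_strings excess_sort /excess big_map.
by apply: eq_bigr => x _; rewrite count_predT size_iota.
Qed.

Lemma grank_pred1_strings R s v m :
  riso R (strings_rep s) -> grank R (pred1 v) m = vcounts s v m.
Proof. by move=> isoR; rewrite (grank_riso _ _ isoR) grank_strings. Qed.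

Lemma grank_ses_vertex N X M v m :
  is_rep N -> is_rep X -> is_rep M -> ses N X M ->
  grank X predT m = grank M predT m + grank N predT m ->
  grank X (pred1 v) m = grank M (pred1 v) m + grank N (pred1 v) m.
Proof.
move=> repN repX repM sesNXM.
have := grank_ses (pred1 v) m sesNXM; have := grank_ses (predC1 v) m sesNXM.
rewrite -(grank_vertex_split v m repN) -(grank_vertex_split v m repX).
rewrite -(grank_vertex_split v m repM); lia.
Qed.

Lemma mu_of_excess R p : nilpotent_rep R -> mu_of R p ->
  [/\ sorted geq p, all (fun x => 0 < x) p & forall m, excess p m = grank R predT m].
Proof.
move=> nilR /(mu_of_strings nilR)[s [isoR -> pos_s]]; split.
- exact: sort_sorted (fun x y => leq_total y x) _.
- by rewrite all_sort all_map.
- by move=> m; rewrite (grank_predT_strings m isoR).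
Qed.

Lemma mu_of_dsum M N p q : mu_of M p -> mu_of N q -> mu_of (dsum M N) (part_union p q).
Proof.
case=> [rs [indrs isoM ->]] [ts [indts isoN ->]]; exists (rs ++ ts); split.
- by move=> r /(@List.in_app_or _ rs ts r)[/indrs|/indts].
- exact: riso_trans (riso_dsum isoM isoN) (riso_sym (bigdsum_cat _ _)).
have geq_anti : antisymmetric geq by move=> x y; rewrite andbC; apply: anti_leq.
apply/(perm_sortP (fun x y => leq_total y x) (rev_trans leq_trans) geq_anti).
by rewrite map_cat perm_cat ?perm_sort.
Qed.

Lemma riso_of_granks R S p q : nilpotent_rep R -> nilpotent_rep S ->
  mu_of R p -> mu_of S q ->
  (forall v m, grank R (pred1 v) m = grank S (pred1 v) m) -> riso R S.
Proof.
move=> nilR nilS /(mu_of_strings nilR)[s [isoR _ pos_s]].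
move=> /(mu_of_strings nilS)[t [isoS _ pos_t]] eqRS.
have eq_st v m : vcounts s v m = vcounts t v m.
  by rewrite -(grank_pred1_strings _ _ isoR) -(grank_pred1_strings _ _ isoS).
apply: riso_trans isoR (riso_trans _ (riso_sym isoS)).
exact/bigdsum_perm/perm_eq_vcounts.
Qed.

End Extensions.

Theorem lemma4p4 (k : fieldType) (l : nat) (M N X : rep k l) :
  is_rep M -> is_rep N -> is_rep X ->
  nilpotent_rep M -> nilpotent_rep N ->
  ses N X M ->
  forall pM pN pX : seq nat,
    mu_of M pM -> mu_of N pN -> mu_of X pX ->
    part_le pX (part_union pM pN) /\
    (pX = part_union pM pN <-> riso X (dsum M N)).
Proof.
move=> repM repN repX nilM nilN sesNXM pM pN pX muM muN muX.
have nilX := nilpotent_ses sesNXM nilM nilN.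
have nilMN := nilpotent_dsum nilM nilN.
have muMN := mu_of_dsum muM muN.
have [sortX posX excessX] := mu_of_excess nilX muX.
have [sortU posU excessU] := mu_of_excess nilMN muMN.
split.
  apply: part_le_of_excess => // m.
  by rewrite excessU excessX grank_dsum grank_ses.
split=> [eqX | isoXMN].
  apply: riso_of_granks nilX nilMN muX muMN _ => v m.
  rewrite grank_dsum; apply: grank_ses_vertex => //.
  by rewrite -grank_dsum -excessU -eqX excessX.
apply: part_eq_of_excess => // m.
by rewrite excessU excessX (grank_riso _ _ isoXMN).
Qed.
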